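(* Let $n\geqslant2$, $\lambda>0$, distinct points $p_1,\ldots,p_M\in\mathbb{Z}^n$ and positive integers $n_1,\ldots,n_M$ be given, and let $g=4\pi\sum_{j=1}^Mn_j\delta_{p_j}$. Let $\Omega_0\subset\mathbb{Z}^n$ be a finite set containing $\{p_j\}_{j=1}^M$ and let $\Omega$ be a finite connected subset with $\Omega_0\subset\Omega$. Fix $K>2\lambda$, let $u_0=0$ and for $k\geqslant1$ let $u_k:\overline\Omega\to\mathbb{R}$ be the (unique) solution of $$(\Delta-K)u_k=\lambda e^{u_{k-1}}(e^{u_{k-1}}-1)+g-Ku_{k-1}\ \text{ on }\Omega,\qquad u_k=0\ \text{ on }\delta\Omega.$$ Then there exists a real-valued function $u_\Omega$ on $\overline\Omega$ such that $u_k\to u_\Omega$ pointwise on $\overline\Omega$, and $u_\Omega$ satisfies $$\Delta u_\Omega=\lambda e^{u_\Omega}(e^{u_\Omega}-1)+g\ \text{ on }\Omega,\qquad u_\Omega=0\ \text{ on }\delta\Omega.$$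
   Context: $\mathbb{Z}^n$ is the integer lattice graph with $x\sim y$ iff $\sum_i|x_i-y_i|=1$. For a finite $\Omega\subset\mathbb{Z}^n$, $\delta\Omega=\{y\in\mathbb{Z}^n\setminus\Omega:\exists x\in\Omega,\ y\sim x\}$ and $\overline\Omega=\Omega\cup\delta\Omega$. For $u:\overline\Omega\to\mathbb{R}$ and $x\in\Omega$, $\Delta u(x)=\sum_{y\sim x}(u(y)-u(x))$. $\delta_p$ is the function equal to $1$ at $p$ and $0$ elsewhere. *)

From HB Require Import structures.
From mathcomp Require Import all_boot all_order all_algebra.
From mathcomp Require Import all_classical all_reals all_analysis.
From mathcomp Require Import Rstruct Rstruct_topology.
From Stdlib Require Import Rdefinitions.
Set Implicit Arguments. Unset Strict Implicit. Unset Printing Implicit Defensive.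
Import Order.TTheory GRing.Theory Num.Theory.
Local Open Scope ring_scope.

Definition pt (n : nat) := {ffun 'I_n -> int}.

Definition adj (n : nat) (x y : pt n) : bool :=
  ((\sum_(i < n) `|x i - y i|)%N == 1%N).

Definition shift (n : nat) (x : pt n) (i : 'I_n) (s : int) : pt n :=
  [ffun j => x j + (if j == i then s else 0)].

Definition nbrs (n : nat) (x : pt n) : seq (pt n) :=
  [seq shift x i 1 | i <- enum 'I_n] ++ [seq shift x i (-1) | i <- enum 'I_n].

Definition lap (n : nat) (u : pt n -> R) (x : pt n) : R :=
  \sum_(y <- nbrs x) (u y - u x).

Definition bdry (n : nat) (Om : seq (pt n)) (y : pt n) : Prop :=
  y \notin Om /\ exists x, x \in Om /\ adj x y.

Definition clos (n : nat) (Om : seq (pt n)) (y : pt n) : Prop :=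
  y \in Om \/ bdry Om y.

Definition connectedZ (n : nat) (Om : seq (pt n)) : Prop :=
  forall x y, x \in Om -> y \in Om ->
    exists s : seq (pt n), [/\ path (@adj n) x s, last x s = y & all (fun z => z \in Om) s].

Definition gsrc (n M : nat) (p : 'I_M -> pt n) (nn : 'I_M -> nat) (x : pt n) : R :=
  4 * pi * \sum_(j < M) (nn j)%:R * (if x == p j then 1 else 0).

From Pilot Require Import Defs.
From HB Require Import structures.
From mathcomp Require Import all_boot all_order all_algebra.
From mathcomp Require Import all_classical all_reals all_analysis.
From mathcomp Require Import Rstruct Rstruct_topology.
From Stdlib Require Import Rdefinitions.
From mathcomp Require Import ring lra.
Set Implicit Arguments. Unset Strict Implicit. Unset Printing Implicit Defensive.
Import Order.TTheory GRing.Theory Num.Theory.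
Local Open Scope classical_set_scope.
Local Open Scope ring_scope.

(* Write [F t = lam e^t (e^t - 1) - K t] ([nonlinK]), so the scheme reads
   [(Delta - K) u_(k+1) = F(u_k) + g].  Since [K > 2 lam], [F] is nonincreasing on
   [t <= 0], and the comparison principle for [Delta - K] (a maximum principle on the
   finite set Omega) shows by induction that [0 = u_0 >= u_1 >= u_2 >= ...].  The
   quadratic [w = G |x|^2 - B], with [G] an upper bound of [g] and [B] large, satisfies
   [(Delta - K) w >= F(w) + g] and [w <= 0] on the closure, so the same comparison gives
   [w <= u_k] for all [k].  Hence [u_k] converges pointwise, and since the Laplacian is a
   finite sum one can pass to the limit in the scheme. *)

Lemma exists_argmax_seq (T : eqType) (f : T -> R) (s : seq T) :
  s != [::] -> exists2 m, m \in s & forall y, y \in s -> f y <= f m.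
Proof.
elim: s => // a [|b s] IH _.
  by exists a => [|y]; rewrite ?mem_seq1 // => /eqP->.
have [m ms hm] := IH isT.
have [le_am | lt_ma] := lerP (f a) (f m).
- exists m => [|y]; first by rewrite inE ms orbT.
  by rewrite inE => /predU1P[->|/hm].
- exists a => [|y]; first exact: mem_head.
  by rewrite inE => /predU1P[->//|/hm/le_trans]; apply; apply: ltW.
Qed.

Lemma sqr_le_sqr_normD1 (a b : R) : `|a - b| <= 1 -> b ^+ 2 <= (`|a| + 1) ^+ 2.
Proof.
move=> hab; rewrite -real_normK ?num_real // lerXn2r ?nnegrE ?addr_ge0 //.
by rewrite -[b](subrK a) (le_trans (ler_normD _ _)) // addrC lerD2l distrC.
Qed.

Definition nonlinK (lam K t : R) := lam * expR t * (expR t - 1) - K * t.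

Lemma expR_sub_le (a b : R) : a <= b -> b <= 0 -> expR b - expR a <= b - a.
Proof.
move=> ab b0.
have eab : expR a = expR b * expR (a - b) by rewrite -exp.expRD addrC subrK.
have := expR_ge1Dx (a - b); have : expR b <= 1 by rewrite expR_le1.
have := expR_gt0 b; rewrite eab; nra.
Qed.

Lemma nonlinK_antitone (lam K a b : R) : 0 <= lam -> 2 * lam <= K ->
  a <= b -> b <= 0 -> nonlinK lam K b <= nonlinK lam K a.
Proof.
move=> lam0 lamK ab b0.
have e2 (t : R) : expR t * expR t = expR (t + t) by rewrite -exp.expRD.
have sq : expR (b + b) - expR (a + a) <= (b + b) - (a + a).
  by apply: expR_sub_le; lra.
have eab : expR a <= expR b by rewrite ler_expR.
rewrite /nonlinK -!mulrA !mulrBr !mulr1 !e2; nra.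
Qed.

Lemma nonlinK_le (lam K w : R) : 0 <= lam -> w <= 0 -> nonlinK lam K w <= - K * w.
Proof.
move=> lam0 w0; have : expR w <= 1 by rewrite expR_le1.
have := mulr_ge0 lam0 (ltW (expR_gt0 w)); rewrite /nonlinK; nra.
Qed.

Lemma continuous_nonlinK (lam K : R) : continuous (nonlinK lam K).
Proof.
move=> t; have ce := @continuous_expR R t.
apply: (cvgB (V := R^o)); last exact: cvgMr.
apply: cvgM; first exact: cvgMr.
by apply: (cvgB (V := R^o)) => //; exact: cvg_cst.
Qed.

Section LatticeLaplacian.
Variable n : nat.
Implicit Types (Om : seq (pt n)) (x y z : pt n) (f h : pt n -> R).

Lemma adj_shift x i (s : int) : `|s|%N = 1%N -> adj x (Defs.shift x i s).
Proof.
move=> s1; rewrite /adj (bigD1 i) //= big1 => [|j ji]; rewrite ffunE.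
  by rewrite eqxx opprD addrA subrr add0r normrN s1.
by rewrite (negbTE ji) addr0 subrr.
Qed.

Lemma nbrs_adj x y : y \in nbrs x -> adj x y.
Proof. by rewrite mem_cat => /orP[] /mapP [i _ ->]; apply: adj_shift. Qed.

Lemma nbrs_clos Om x y : x \in Om -> y \in nbrs x -> clos Om y.
Proof.
move=> xOm /nbrs_adj xy; have [yOm | yOm] := boolP (y \in Om); first by left.
by right; split => //; exists x.
Qed.

Lemma lapB f h x : lap (fun y => f y - h y) x = lap f x - lap h x.
Proof. by rewrite /lap -sumrB; apply: eq_bigr => y _; ring. Qed.

Lemma lap_cst (c : R) x : lap (fun=> c) x = 0.
Proof. by rewrite /lap big1 // => y _; rewrite subrr. Qed.

Lemma lap_affine (c d : R) f x : lap (fun y => c * f y + d) x = c * lap f x.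
Proof. by rewrite /lap mulr_sumr; apply: eq_bigr => y _; ring. Qed.

Lemma lap_cvg (v : nat -> pt n -> R) (l : pt n -> R) x :
  (forall y, y \in x :: nbrs x -> v k y @[k --> \oo] --> l y) ->
  lap (v k) x @[k --> \oo] --> lap l x.
Proof.
move=> hv; rewrite /lap big_seq; under eq_cvg do rewrite big_seq.
apply: (cvg_big (P := fun y => y \in nbrs x)) => [|y yx].
  exact: (@add_continuous R^o).
by apply: (cvgB (V := R^o)); apply: hv; rewrite ?mem_head // in_cons yx orbT.
Qed.

Lemma maximum_principle Om (K : R) f : 0 < K ->
  (forall x, x \in Om -> K * f x <= lap f x) ->
  (forall x, bdry Om x -> f x <= 0) -> forall x, x \in Om -> f x <= 0.
Proof.
move=> K0 sub fbd x xOm; rewrite leNgt; apply/negP => fx.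
have [|m mOm fm] := exists_argmax_seq f (s := Om); first by case: Om xOm {sub fbd}.
have fm0 : 0 < f m by apply: lt_le_trans fx (fm x xOm).
have : lap f m <= 0.
  rewrite /lap big_seq; apply: sumr_le0 => y ym; rewrite subr_le0.
  case: (nbrs_clos mOm ym) => [/fm // | /fbd fy]; exact: le_trans fy (ltW fm0).
by move: (sub m mOm); have := mulr_gt0 K0 fm0; lra.
Qed.

Lemma comparison_principle Om (K : R) f h : 0 < K ->
  (forall x, x \in Om -> lap h x - K * h x <= lap f x - K * f x) ->
  (forall x, bdry Om x -> f x <= h x) -> forall x, clos Om x -> f x <= h x.
Proof.
move=> K0 sub fh x [xOm | /fh //]; rewrite -subr_le0.
apply: (maximum_principle (f := fun y => f y - h y) K0) xOm => [y yOm | y /fh].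
  by rewrite lapB; move: (sub y yOm); lra.
by rewrite subr_le0.
Qed.

Definition normsq x := \sum_(i < n) ((x i)%:~R : R) ^+ 2.

Lemma lap_normsq x : lap normsq x = 2 * n%:R.
Proof.
have shiftE i s : normsq (Defs.shift x i s) - normsq x = 2 * (x i)%:~R * s%:~R + s%:~R ^+ 2.
  rewrite /normsq -sumrB (bigD1 i) //= big1 => [|j ji]; rewrite ffunE.
    by rewrite eqxx intrD; ring.
  by rewrite (negbTE ji) addr0 subrr.
rewrite /lap /nbrs big_cat !big_map -enumT !big_enum /= -big_split /=.
under eq_bigr => i _ do rewrite !shiftE intrN.
rewrite (eq_bigr (fun _ => 2)) => [|i _]; last by ring.
by rewrite sumr_const card_ord mulr_natr.
Qed.

Definition normsq_hull x := \sum_(i < n) (`|(x i)%:~R : R| + 1) ^+ 2.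

Lemma normsq_le_hull z y : (forall i, `|z i - y i| <= 1) -> normsq y <= normsq_hull z.
Proof.
move=> zy; apply: ler_sum => i _; apply: sqr_le_sqr_normD1.
by rewrite -intrB -intr_norm -[1]/(1%:~R) ler_int.
Qed.

Lemma normsq_clos_le Om y : clos Om y -> normsq y <= \sum_(z <- Om) normsq_hull z.
Proof.
move=> cy.
have hull_ge0 z : 0 <= normsq_hull z by apply: sumr_ge0 => i _; apply: sqr_ge0.
suff [z zOm zy] : exists2 z, z \in Om & forall i, `|z i - y i| <= 1.
  apply: (le_trans (normsq_le_hull zy)).
  rewrite (perm_big _ (perm_to_rem zOm)) big_cons lerDl.
  by apply: sumr_ge0 => w _; exact: hull_ge0.
case: cy => [yOm | [_ [z [zOm /eqP zy]]]]; first by exists y => // i; rewrite subrr.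
exists z => // i; rewrite -zy (bigD1 i) //= lerDl.
by apply: sumr_ge0 => j _; exact: normr_ge0.
Qed.

End LatticeLaplacian.

Section MonotoneIteration.
Variables (n : nat) (Om : seq (pt n)) (lam K G : R) (g : pt n -> R) (u : nat -> pt n -> R).
Hypotheses (n_gt0 : (0 < n)%nat) (lam_ge0 : 0 <= lam) (lamK : 2 * lam < K).
Hypotheses (g_ge0 : forall x, 0 <= g x) (g_le : forall x, g x <= G).
Hypothesis u_init : forall x, clos Om x -> u 0 x = 0.
Hypothesis u_step : forall k x, x \in Om ->
  lap (u k.+1) x - K * u k.+1 x = lam * expR (u k x) * (expR (u k x) - 1) + g x - K * u k x.
Hypothesis u_bdry : forall k x, bdry Om x -> u k.+1 x = 0.

Let K_gt0 : 0 < K. Proof. exact: le_lt_trans (mulr_ge0 (ler0n _ 2) lam_ge0) lamK. Qed.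

Let u_stepE k x : x \in Om ->
  lap (u k.+1) x - K * u k.+1 x = nonlinK lam K (u k x) + g x.
Proof. by move=> xOm; rewrite u_step // /nonlinK addrAC. Qed.

Let u_bdry0 k x : bdry Om x -> u k x = 0.
Proof. by case: k => [xb | k /u_bdry //]; apply: u_init; right. Qed.

Lemma iterate_antitone_le0 k x : clos Om x -> u k.+1 x <= u k x /\ u k x <= 0.
Proof.
elim: k x => [|k IH] x cx.
  rewrite u_init //; split => //.
  apply: (comparison_principle (h := fun=> 0) K_gt0) cx => [y yOm | y /u_bdry0 -> //].
  rewrite lap_cst u_stepE // u_init; last by left.
  by rewrite /nonlinK exp.expR0 subrr !mulr0 !subr0 add0r g_ge0.
have [le_u1u0 le_u0] := IH x cx; split; last exact: le_trans le_u0.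
apply: (comparison_principle K_gt0) cx => [y yOm | y yb]; last by rewrite !u_bdry0.
have [le_y le_y0] := IH y (or_introl yOm).
by rewrite !u_stepE // lerD2r nonlinK_antitone // ltW.
Qed.

Let subsol (x : pt n) := G * normsq x - G * \sum_(z <- Om) normsq_hull z.

Let G_ge0 : 0 <= G.
Proof. exact: le_trans (g_ge0 [ffun=> 0]) (g_le _). Qed.

Let subsol_le0 x : clos Om x -> subsol x <= 0.
Proof. by move=> cx; rewrite subr_le0 ler_wpM2l // normsq_clos_le. Qed.

Lemma subsol_le_iterate k x : clos Om x -> subsol x <= u k x.
Proof.
elim: k x => [|k IH] x cx; first by rewrite u_init // subsol_le0.
apply: (comparison_principle K_gt0) cx => [y yOm | y yb]; last first.
  by rewrite u_bdry // subsol_le0 //; right.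
have cy : clos Om y by left.
have [_ le_u0] := iterate_antitone_le0 k cy.
have le_F := nonlinK_antitone lam_ge0 (ltW lamK) (IH y cy) le_u0.
have le_Fw := nonlinK_le K lam_ge0 (subsol_le0 cy).
have le_G2n : G <= G * (2 * n%:R).
  have n1 : 1 <= n%:R :> R by rewrite ler1n.
  by rewrite ler_peMr //; lra.
rewrite u_stepE // lap_affine lap_normsq.
by move: (g_le y); rewrite /subsol in le_Fw *; lra.
Qed.

Let ulim (x : pt n) := inf (range (fun k => u k x)).

Lemma iterate_cvg x : clos Om x -> u k x @[k --> \oo] --> ulim x.
Proof.
move=> cx; apply: nonincreasing_cvgn.
  by apply/nonincreasing_seqP => k; exact: (iterate_antitone_le0 k cx).1.
by exists (subsol x) => _ [k _ <-]; exact: subsol_le_iterate.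
Qed.

Lemma ulim_solves x : x \in Om ->
  lap ulim x = lam * expR (ulim x) * (expR (ulim x) - 1) + g x.
Proof.
move=> xOm.
have cvgS y : clos Om y -> u k.+1 y @[k --> \oo] --> ulim y.
  by move=> /iterate_cvg; rewrite -cvg_shiftS.
have lhs : lap (u k.+1) x - K * u k.+1 x @[k --> \oo] --> lap ulim x - K * ulim x.
  apply: (cvgB (V := R^o)); last by apply: cvgMr; apply: cvgS; left.
  apply: lap_cvg => y /predU1P[-> | /(nbrs_clos xOm) cy]; apply: cvgS => //; exact: or_introl.
have rhs : lap (u k.+1) x - K * u k.+1 x @[k --> \oo] --> nonlinK lam K (ulim x) + g x.
  under eq_cvg do rewrite u_stepE //.
  apply: (cvgD (V := R^o)); last exact: cvg_cst.
  exact: cvg_comp _ _ (iterate_cvg (or_introl xOm)) (@continuous_nonlinK lam K _).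
suff : lap ulim x - K * ulim x = nonlinK lam K (ulim x) + g x by rewrite /nonlinK; lra.
apply: (cvg_unique (@norm_hausdorff _ R^o) lhs rhs).
Qed.

Lemma ulim_bdry x : bdry Om x -> ulim x = 0.
Proof.
move=> xb; have := iterate_cvg (or_intror xb).
under eq_cvg do rewrite u_bdry0 //.
by move=> u0; apply: (cvg_unique (@norm_hausdorff _ R^o) u0 (cvg_cst 0)).
Qed.

Theorem monotone_iteration_cvg :
  exists uOm : pt n -> R,
    [/\ (forall x, clos Om x -> u k x @[k --> \oo] --> uOm x),
        (forall x, x \in Om ->
           lap uOm x = lam * expR (uOm x) * (expR (uOm x) - 1) + g x)
      & (forall x, bdry Om x -> uOm x = 0)].
Proof.
by exists ulim; split; [exact: iterate_cvg | exact: ulim_solves | exact: ulim_bdry].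
Qed.

End MonotoneIteration.

Lemma gsrcE n M (p : 'I_M -> pt n) (nn : 'I_M -> nat) x :
  gsrc p nn x = 4 * pi * \sum_(j < M) (nn j)%:R * (x == p j)%:R.
Proof.
rewrite /gsrc IZRposE INRE !RmultE; congr (_ * _).
by apply: eq_bigr => j _; case: eqP.
Qed.

Lemma gsrc_ge0 n M (p : 'I_M -> pt n) (nn : 'I_M -> nat) x : 0 <= gsrc p nn x.
Proof. by rewrite gsrcE !mulr_ge0 ?pi_ge0 // sumr_ge0. Qed.

Lemma gsrc_le n M (p : 'I_M -> pt n) (nn : 'I_M -> nat) x :
  gsrc p nn x <= 4 * pi * \sum_(j < M) (nn j)%:R.
Proof.
rewrite gsrcE ler_wpM2l ?mulr_ge0 ?pi_ge0 // ler_sum // => j _.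
by rewrite ler_piMr // lern1 leq_b1.
Qed.

Theorem lemma3p2 (n M : nat) (lam K : R) (p : 'I_M -> pt n) (nn : 'I_M -> nat)
  (Om0 Om : seq (pt n)) (u : nat -> pt n -> R) :
  leq 2 n -> leq 1 M -> 0 < lam ->
  injective p -> (forall j, leq 1 (nn j)) ->
  (forall j, p j \in Om0) -> {subset Om0 <= Om} -> connectedZ Om ->
  2 * lam < K ->
  (forall x, clos Om x -> u 0%N x = 0) ->
  (forall k x, x \in Om ->
     lap (u k.+1) x - K * u k.+1 x
     = lam * expR (u k x) * (expR (u k x) - 1) + gsrc p nn x - K * u k x) ->
  (forall k x, bdry Om x -> u k.+1 x = 0) ->
  exists uOm : pt n -> R,
    [/\ (forall x, clos Om x -> (fun k => u k x) @ \oo --> uOm x),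
        (forall x, x \in Om ->
           lap uOm x = lam * expR (uOm x) * (expR (uOm x) - 1) + gsrc p nn x)
      & (forall x, bdry Om x -> uOm x = 0)].
Proof.
move=> n_ge2 _ lam_gt0 _ _ _ _ _ lamK u_init u_step u_bdry.
have n_gt0 : (0 < n)%nat by exact: leq_trans n_ge2.
exact: monotone_iteration_cvg n_gt0 (ltW lam_gt0) lamK
  (@gsrc_ge0 _ _ p nn) (@gsrc_le _ _ p nn) u_init u_step u_bdry.
Qed.
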